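(* Let $\mathcal{X}$ be a finite set, let $H:\mathcal{X}^2\to\mathbb{R}$ be any function and let $r\in\mathcal{P}_+(\mathcal{X})$. Then there exist functions $\kappa:\mathcal{X}\to\mathbb{R}$ and $\delta:\mathcal{X}\to\mathbb{R}$ such that the function \[ w(y|x) = \exp\bigl(H(x,y)+\kappa(y)-\kappa(x)-\delta(y)\bigr),\qquad (x,y)\in\mathcal{X}^2, \] is a Markov kernel on $\mathcal{X}$ whose stationary distribution is $r$, i.e. $\sum_{x\in\mathcal{X}} r(x)w(y|x)=r(y)$ for all $y\in\mathcal{X}$. Moreover, $\delta$ is uniquely determined, and $\kappa$ is unique up to an additive constant.
   Context: $\mathcal{P}_+(\mathcal{X})$ denotes the set of strictly positive probability distributions on the finite set $\mathcal{X}$ (functions $r:\mathcal{X}\to(0,\infty)$ with $\sum_x r(x)=1$). A Markov kernel on $\mathcal{X}$ is a function $w:\mathcal{X}^2\to[0,\infty)$, written $w(y|x)$, with $\sum_{y\in\mathcal{X}}w(y|x)=1$ for every $x\in\mathcal{X}$. A distribution $p$ is a stationary distribution of $w$ if $\sum_x w(y|x)p(x)=p(y)$ for all $y$; a strictly positive Markov kernel has a unique stationary distribution. *)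

From HB Require Import structures.
From mathcomp Require Import all_boot all_order all_algebra.
From mathcomp Require Import reals.
From mathcomp Require Import sequences.
From mathcomp.analysis Require Import exp.
Set Implicit Arguments. Unset Strict Implicit. Unset Printing Implicit Defensive.
Import Order.TTheory GRing.Theory Num.Theory.
Local Open Scope ring_scope.

(* A kernel w is written w y x, read w(y|x). *)
Definition markov_kernel (R : realType) (X : finType) (w : X -> X -> R) : Prop :=
  (forall x y, 0 <= w y x) /\ (forall x, \sum_(y : X) w y x = 1).

Definition stationary (R : realType) (X : finType) (w : X -> X -> R) (p : X -> R) : Prop :=
  forall y, \sum_(x : X) w y x * p x = p y.

Definition pos_distr (R : realType) (X : finType) (r : X -> R) : Prop :=
  (forall x, 0 < r x) /\ \sum_(x : X) r x = 1.

Definition tilted_kernel (R : realType) (X : finType) (H : X -> X -> R)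
  (kappa delta : X -> R) : X -> X -> R :=
  fun y x => expR (H x y + kappa y - kappa x - delta y).

From HB Require Import structures.
From mathcomp Require Import all_boot all_order all_algebra.
From mathcomp Require Import reals.
From mathcomp Require Import sequences.
From mathcomp.analysis Require Import exp.
From mathcomp Require Import boolp classical_sets topology normedtype derive.
From mathcomp Require Import ring lra.
Import Order.TTheory GRing.Theory Num.Theory.
Import numFieldNormedType.Exports ArrowAsProduct.
Local Open Scope ring_scope.
Set Implicit Arguments. Unset Strict Implicit. Unset Printing Implicit Defensive.

(* A kernel of the required form is exp(H(x,y)) e^{a(x)} e^{b(y)} with a = -kappa
   and b = kappa - delta.  Stationarity alone forces e^{b(y)} = r(y) / S_a(y), where
   S_a(y) = sum_x r(x) exp(H(x,y) + a(x)); the row sums are then all 1 exactly at a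
   critical point of the potential
     Psi(a) = sum_y r(y) ln S_a(y) - sum_x r(x) a(x).
   Psi is invariant under adding constants to a and grows with max a - min a, so it
   attains its minimum on a compact box; perturbing one coordinate of a minimiser
   shows that its row sums are 1.
   Two solutions differ by a factor exp(d(x) + e(y)).  With D = max d, stationarity
   gives e >= -D, the row sum at an argmax of d then forces e = -D, and
   stationarity once more forces d = D. *)

Lemma sumr_ge_term (R : numDomainType) (I : finType) (F : I -> R) i :
  (forall j, 0 <= F j) -> F i <= \sum_j F j.
Proof. by move=> F_ge0; rewrite (bigD1 i) //= lerDl sumr_ge0. Qed.

Lemma ler_sum_eq (R : numDomainType) (I : finType) (F G : I -> R) :
  (forall i, F i <= G i) -> \sum_i F i = \sum_i G i -> forall i, F i = G i.
Proof.
move=> FG eqFG i; apply/eqP; rewrite eq_sym -subr_eq0; apply/eqP.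
apply: (@psumr_eq0P _ _ xpredT (fun j => G j - F j)) => // [j _|].
  by rewrite subr_ge0.
by rewrite sumrB eqFG subrr.
Qed.

Lemma mulr_expR_id (R : realType) (p s : R) : 0 < p -> p * expR s = p -> s = 0.
Proof.
move=> p_gt0 /eqP; rewrite -{2}[p]mulr1 (inj_eq (mulfI (lt0r_neq0 p_gt0))).
by rewrite -expR0 => /eqP /expR_inj.
Qed.

Section ExponentialTilt.
Variables (R : realType) (X : finType) (r : X -> R) (V W : X -> X -> R).
Variables (d e : X -> R).
Hypotheses (r_gt0 : forall x, 0 < r x) (V_gt0 : forall x y, 0 < V y x).
Hypotheses (V_row : forall x, \sum_y V y x = 1) (W_row : forall x, \sum_y W y x = 1).
Hypotheses (V_stat : stationary V r) (W_stat : stationary W r).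
Hypothesis W_tilt : forall x y, W y x = V y x * expR (d x + e y).

Lemma tilt_exponent_eq0 x y : d x + e y = 0.
Proof.
have [xM _ d_max] := @arg_maxP _ R X x xpredT d isT.
have d_le z : d z <= d xM by exact: d_max.
have e_ge z : 0 <= d xM + e z.
  rewrite -ler_expR expR0 -(ler_pM2r (r_gt0 z)) mul1r -{1}W_stat -V_stat mulr_sumr.
  apply: ler_sum => x' _; rewrite W_tilt mulrAC [leRHS]mulrC.
  by rewrite ler_pM2l ?mulr_gt0 // ler_expR lerD2r d_le.
have e_eq z : d xM + e z = 0.
  apply: (@mulr_expR_id _ (V z xM)) => //; apply/esym; move: z.
  apply: (@ler_sum_eq _ _ (fun z => V z xM)) => [z|].
    by rewrite ler_peMr ?(ltW (V_gt0 _ _)) // -expR0 ler_expR.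
  by rewrite V_row -(W_row xM); apply: eq_bigr => z _; rewrite W_tilt.
have d_eq z : d z = d xM.
  apply/eqP; rewrite -subr_eq0; apply/eqP.
  apply: (@mulr_expR_id _ (V y z * r z)); first by rewrite mulr_gt0.
  move: z; apply: (@ler_sum_eq _ _ (fun z => V y z * r z * expR (d z - d xM))) => [z|].
    by rewrite ler_piMr ?mulr_ge0 ?(ltW (V_gt0 _ _)) ?(ltW (r_gt0 _)) // expR_le1 subr_le0.
  rewrite V_stat -W_stat; apply: eq_bigr => z _.
  rewrite W_tilt [RHS]mulrAC; congr (_ * expR _); have := e_eq y; lra.
by rewrite d_eq e_eq.
Qed.

End ExponentialTilt.

Lemma tilted_kernel_uniq (R : realType) (X : finType) (H : X -> X -> R) (r : X -> R)
    (kappa1 delta1 kappa2 delta2 : X -> R) :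
  (forall x, 0 < r x) ->
  markov_kernel (tilted_kernel H kappa1 delta1) ->
  stationary (tilted_kernel H kappa1 delta1) r ->
  markov_kernel (tilted_kernel H kappa2 delta2) ->
  stationary (tilted_kernel H kappa2 delta2) r ->
  delta1 = delta2 /\ exists c : R, forall x, kappa1 x = kappa2 x + c.
Proof.
move=> r_gt0 [_ row1] stat1 [_ row2] stat2.
pose d x := kappa2 x - kappa1 x.
pose e y := kappa1 y - delta1 y - kappa2 y + delta2 y.
have tilt : forall x y, d x + e y = 0.
  have V_gt0 x y : 0 < tilted_kernel H kappa2 delta2 y x by exact: expR_gt0.
  apply: (tilt_exponent_eq0 r_gt0 V_gt0 row2 row1 stat2 stat1).
  by move=> x y; rewrite /tilted_kernel -expRD /d /e; congr expR; lra.
split.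
  by apply: funext => x; have := tilt x x; rewrite /d /e; lra.
have [x0 _|X0] := pickP (xpredT : pred X); last by exists 0 => x; have := X0 x.
by exists (e x0) => x; have := tilt x x0; rewrite /d; lra.
Qed.

Section ScalingPotential.
Variables (R : realType) (X : finType) (H : X -> X -> R) (r : X -> R).
Hypotheses (r_gt0 : forall x, 0 < r x) (r_sum1 : \sum_x r x = 1).

Definition mass (a : X -> R) (y : X) : R := \sum_x r x * expR (H x y + a x).

Definition potential (a : X -> R) : R :=
  \sum_y r y * ln (mass a y) - \sum_x r x * a x.

Definition scaled_kernel (a : X -> R) : X -> X -> R :=
  fun y x => expR (H x y + a x) * r y / mass a y.

Lemma domain_inhabited : exists x : X, true.
Proof.
have [x _|X0] := pickP (xpredT : pred X); first by exists x.
by move: r_sum1; rewrite big_pred0 // => /eqP; rewrite eq_sym oner_eq0.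
Qed.

Lemma mass_ge_term a x y : r x * expR (H x y + a x) <= mass a y.
Proof.
apply: (sumr_ge_term (F := fun z => r z * expR (H z y + a z))) => z.
by rewrite mulr_ge0 ?expR_ge0 ?ltW.
Qed.

Lemma mass_gt0 a y : 0 < mass a y.
Proof. by apply: lt_le_trans (mass_ge_term a y y); rewrite mulr_gt0 ?expR_gt0. Qed.

Lemma mass_shift a c y : mass (fun x => a x + c) y = expR c * mass a y.
Proof.
by rewrite /mass mulr_sumr; apply: eq_bigr => x _; rewrite addrA (expRD _ c); ring.
Qed.

Lemma potential_shift a c : potential (fun x => a x + c) = potential a.
Proof.
rewrite /potential (eq_bigr (fun y => r y * ln (mass a y) + c * r y)); last first.
  by move=> y _; rewrite mass_shift lnM ?posrE ?expR_gt0 ?mass_gt0 // expRK; ring.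
rewrite [X in _ - X](eq_bigr (fun x => r x * a x + c * r x)); last by move=> x _; ring.
by rewrite !big_split /= -mulr_sumr r_sum1 opprD addrACA subrr addr0.
Qed.

Let ln_mass_lb x := \sum_y r y * (ln (r x) + H x y).
Let ln_mass_lb_norm : R := \sum_x `|ln_mass_lb x|.

Lemma potential_ge_row a x : ln_mass_lb x + a x - \sum_z r z * a z <= potential a.
Proof.
rewrite /potential lerD2r.
have -> : ln_mass_lb x + a x = \sum_y r y * ln (r x * expR (H x y + a x)).
  rewrite /ln_mass_lb -[in LHS](mulr1 (a x)) -r_sum1 mulr_sumr -big_split /=.
  by apply: eq_bigr => y _; rewrite lnM ?posrE ?expR_gt0 // expRK; ring.
apply: ler_sum => y _; rewrite ler_pM2l // ler_ln ?posrE ?mulr_gt0 ?expR_gt0 ?mass_gt0 //.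
exact: mass_ge_term.
Qed.

Lemma potential_ge_spread a xm xM :
  (forall x, a xm <= a x) -> (forall x, a x <= a xM) ->
  r xm * (a xM - a xm) - ln_mass_lb_norm <= potential a.
Proof.
move=> a_ge a_le; apply: le_trans (potential_ge_row a xM).
have ln_mass_lb_ge : - ln_mass_lb_norm <= ln_mass_lb xM.
  apply: lerNnormlW.
  exact: (sumr_ge_term (F := fun x => `|ln_mass_lb x|)).
have mean_le : \sum_z r z * (a xM - a z) >= r xm * (a xM - a xm).
  apply: (sumr_ge_term (F := fun z => r z * (a xM - a z))) => z.
  by rewrite mulr_ge0 ?subr_ge0 // ltW.
move: mean_le; rewrite (eq_bigr (fun z => a xM * r z - r z * a z)); last first.
  by move=> z _; ring.
rewrite sumrB -mulr_sumr r_sum1; lra.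
Qed.

Definition spread_bound := (potential (fun _ => 0) + ln_mass_lb_norm) * \sum_x (r x)^-1.

Lemma potential_sublevel_shift b :
  potential b <= potential (fun _ => 0) ->
  exists c, forall x, 0 <= b x + c <= spread_bound.
Proof.
move=> b_le; have [x0 _] := domain_inhabited.
have [xm _ b_min] := @arg_minP _ R X x0 xpredT b isT.
have [xM _ b_max] := @arg_maxP _ R X x0 xpredT b isT.
have b_ge x : b xm <= b x by exact: b_min.
have b_le' x : b x <= b xM by exact: b_max.
have spread_ge0 : 0 <= b xM - b xm by rewrite subr_ge0.
have spread_le : r xm * (b xM - b xm) <= potential (fun _ => 0) + ln_mass_lb_norm.
  by have := potential_ge_spread b_ge b_le'; lra.
exists (- b xm) => x; rewrite subr_ge0 b_ge /=.
apply: (@le_trans _ _ (b xM - b xm)); first by rewrite lerD2r.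
apply: (@le_trans _ _ ((potential (fun _ => 0) + ln_mass_lb_norm) / r xm)).
  by rewrite ler_pdivlMr // mulrC.
apply: ler_wpM2l; first exact: le_trans (mulr_ge0 (ltW (r_gt0 xm)) spread_ge0) spread_le.
by apply: (sumr_ge_term (F := fun x => (r x)^-1)) => z; rewrite invr_ge0 ltW.
Qed.

Lemma continuous_potential : continuous potential.
Proof.
have cont_sum (F : X -> (X -> R) -> R) :
    (forall i, continuous (F i)) -> continuous (fun a => \sum_i F i a).
  by move=> F_cont; apply: continuous_big => // -[u v]; exact: add_continuous.
have cont_scale c (f : (X -> R) -> R) : continuous f -> continuous (fun a => c * f a).
  move=> f_cont a.
  by have := @continuousM _ _ (fun=> c) f a (@cst_continuous _ R c a) (f_cont a).
have cont_eval x : continuous (fun a : X -> R => a x).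
  exact: (@proj_continuous X (fun _ => R)).
move=> a; apply: continuousB.
  apply: (cont_sum) => y; apply: (cont_scale) => b.
  apply: (continuous_comp (f := fun b => mass b y)); last exact/continuous_ln/mass_gt0.
  apply: (cont_sum) => x; apply: (cont_scale) => c.
  apply: (continuous_comp (f := fun c => H x y + c x)); last exact: continuous_expR.
  by apply: continuousD; [exact: cst_continuous | exact: cont_eval].
by apply: (cont_sum) => x; apply: (cont_scale).
Qed.

Lemma potential_has_min : exists a, forall b, potential a <= potential b.
Proof.
pose box := [set a : X -> R | forall x, `[0, spread_bound]%classic (a x)]%classic.
have box_compact : compact box := tychonoff (fun _ => @segment_compact R 0 spread_bound).
have in_box b : potential b <= potential (fun _ => 0) ->
    exists c, box (fun x => b x + c).
  move=> /potential_sublevel_shift [c bc]; exists c => x /=.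
  by rewrite in_itv /= bc.
have [c c_box] := in_box _ (lexx _).
have [a _ a_min] := compact_EVT_min (ex_intro _ _ c_box) box_compact
  (continuous_subspaceT continuous_potential).
exists a => b; have [b_gt|b_le] := ltP (potential (fun _ => 0)) (potential b).
  apply: le_trans (ltW b_gt); rewrite -[X in _ <= X](potential_shift _ c).
  by apply: a_min; rewrite inE.
have [c' c'_box] := in_box b b_le.
by rewrite -(potential_shift b c'); apply: a_min; rewrite inE.
Qed.

Definition row_mass (a : X -> R) (x : X) : R := \sum_y scaled_kernel a y x.

Lemma potential_bump a x0 t :
  potential (fun x => a x + (if x == x0 then t else 0)) <=
  potential a + r x0 * ((expR t - 1) * row_mass a x0 - t).
Proof.
set b := fun x => _.
have mass_b y : mass b y = mass a y + r x0 * expR (H x0 y + a x0) * (expR t - 1).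
  rewrite /mass (bigD1 x0) // [in RHS](bigD1 x0) //= /b /= eqxx.
  rewrite (eq_bigr (fun x => r x * expR (H x y + a x))) => [|x /negbTE ->]; last first.
    by rewrite addr0.
  by rewrite (addrA (H x0 y)) (expRD _ t); ring.
have lin_b : \sum_x r x * b x = \sum_x r x * a x + r x0 * t.
  have bump_sum : \sum_x r x * (if x == x0 then t else 0) = r x0 * t.
    rewrite (bigD1 x0) //= eqxx big1 ?addr0 // => x /negbTE ->.
    exact: mulr0.
  rewrite -bump_sum -big_split /=; apply: eq_bigr => x _.
  by rewrite /b mulrDr.
have ln_b y : r y * ln (mass b y) <=
    r y * ln (mass a y) + r x0 * (expR t - 1) * scaled_kernel a y x0.
  have ma_gt0 := mass_gt0 a y.
  have ln_ratio := expR_ge1Dx (ln (mass b y / mass a y)).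
  rewrite lnK ?posrE ?divr_gt0 ?mass_gt0 // ln_div ?posrE ?mass_gt0 // in ln_ratio.
  have -> : r x0 * (expR t - 1) * scaled_kernel a y x0 =
      r y * (mass b y / mass a y - 1).
    by rewrite /scaled_kernel mass_b; field; rewrite gt_eqF.
  rewrite -mulrDr ler_pM2l //; lra.
rewrite /potential lin_b.
suff : \sum_y r y * ln (mass b y) <=
    \sum_y r y * ln (mass a y) + r x0 * (expR t - 1) * row_mass a x0 by lra.
by rewrite /row_mass mulr_sumr -big_split; apply: ler_sum => y _; exact: ln_b.
Qed.

Lemma row_mass_argmin a :
  (forall b, potential a <= potential b) -> forall x, row_mass a x = 1.
Proof.
move=> a_min x; set Q := row_mass a x.
have Q_gt0 : 0 < Q.
  apply: lt_le_trans (sumr_ge_term (F := fun y => scaled_kernel a y x) x _) => [|y].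
    by rewrite divr_gt0 ?mulr_gt0 ?expR_gt0 ?mass_gt0.
  by rewrite divr_ge0 ?mulr_ge0 ?expR_ge0 ?ltW ?mass_gt0.
have := le_trans (a_min _) (potential_bump a x (- ln Q)).
rewrite expRN lnK ?posrE // opprK lerDl pmulr_rge0 // -/Q mulrBl mulVf ?gt_eqF //.
rewrite mul1r => Q_le.
have lnQ0 : ln Q = 0.
  apply/eqP; apply: contraTT Q_le => lnQ_neq0.
  have := expR_gt1Dx lnQ_neq0; rewrite lnK ?posrE // -ltNge; lra.
by rewrite -[Q]lnK ?posrE // lnQ0 expR0.
Qed.

Lemma scaled_kernel_stationary a : stationary (scaled_kernel a) r.
Proof.
move=> y; rewrite (eq_bigr (fun x => r y / mass a y * (r x * expR (H x y + a x)))).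
  by rewrite -mulr_sumr -/(mass a y) divfK ?gt_eqF ?mass_gt0.
by move=> x _; rewrite /scaled_kernel; ring.
Qed.

Lemma scaled_kernel_markov a :
  (forall b, potential a <= potential b) -> markov_kernel (scaled_kernel a).
Proof.
move=> a_min; split; last exact: row_mass_argmin.
by move=> x y; rewrite divr_ge0 ?mulr_ge0 ?expR_ge0 ?ltW ?mass_gt0.
Qed.

Lemma tilted_kernel_scaled a :
  tilted_kernel H (fun x => - a x) (fun y => - a y - ln (r y / mass a y)) =
  scaled_kernel a.
Proof.
apply/funext => y; apply/funext => x; rewrite /tilted_kernel /scaled_kernel.
have -> : H x y + - a y - - a x - (- a y - ln (r y / mass a y)) =
    H x y + a x + ln (r y / mass a y) by ring.
by rewrite expRD lnK ?posrE ?divr_gt0 ?mass_gt0 // mulrA.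
Qed.

End ScalingPotential.

Theorem theorem1 (R : realType) (X : finType) (H : X -> X -> R) (r : X -> R)
  (hr : pos_distr r) :
  (exists kappa delta : X -> R,
      markov_kernel (tilted_kernel H kappa delta) /\
      stationary (tilted_kernel H kappa delta) r)
  /\
  (forall kappa1 delta1 kappa2 delta2 : X -> R,
      markov_kernel (tilted_kernel H kappa1 delta1) ->
      stationary (tilted_kernel H kappa1 delta1) r ->
      markov_kernel (tilted_kernel H kappa2 delta2) ->
      stationary (tilted_kernel H kappa2 delta2) r ->
      delta1 = delta2 /\ exists c : R, forall x, kappa1 x = kappa2 x + c).
Proof.
case: hr => r_gt0 r_sum1; split; last first.
  by move=> kappa1 delta1 kappa2 delta2; exact: tilted_kernel_uniq.
have [a a_min] := potential_has_min H r_gt0 r_sum1.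
exists (fun x => - a x), (fun y => - a y - ln (r y / mass H r a y)).
rewrite tilted_kernel_scaled //; split.
  exact: scaled_kernel_markov.
exact: scaled_kernel_stationary.
Qed.
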